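(* Let $f(x,y)=\mathbb{E}_{\xi\sim\mathcal{D}}[f(x,y;\xi)]$ on $\mathbb{R}^d\times\mathbb{R}^p$, $F(x)=\max_y f(x,y)$, and assume: (A1) there is $\mu>0$ such that for every $x$ the set $\arg\max_y f(x,y)$ is nonempty and $\|\nabla_y f(x,y)\|^2\ge2\mu\big(\max_{y'}f(x,y')-f(x,y)\big)$ for all $y$; (A2) for every $\xi$, $\nabla_x f(\cdot,\cdot;\xi)$ and $\nabla_y f(\cdot,\cdot;\xi)$ are $L_f$-Lipschitz in each of the arguments $x$ and $y$ separately. Let $\{x_t,y_t,\tilde x_t,\tilde y_t,v_t\}$ be generated by the MSGDA algorithm (see context). If $0<\gamma\le\frac{\lambda\mu}{16L}$ and $0<\lambda\le\frac{1}{2L_f\eta_t}$ for all $t\ge1$, then for all $t\ge1$, $$F(x_{t+1})-f(x_{t+1},y_{t+1})\le\Big(1-\frac{\eta_t\lambda\mu}{2}\Big)\big(F(x_t)-f(x_t,y_t)\big)+\frac{\eta_t}{8\gamma}\|\tilde x_{t+1}-x_t\|^2-\frac{\eta_t}{4\lambda}\|\tilde y_{t+1}-y_t\|^2+\eta_t\lambda\|\nabla_y f(x_t,y_t)-v_t\|^2,$$ where $F(x_t)=f(x_t,y^*(x_t))$ with $y^*(x_t)\in\arg\max_y f(x_t,y)$.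
   Context: $\kappa=L_f/\mu$, $L=L_f(1+\kappa/2)$. MSGDA algorithm: given constants $\gamma,\lambda>0$, sequences $\eta_t>0$ and $\alpha_t,\beta_t\in(0,1]$, initial points $x_1,y_1$, and samples $\xi_1,\xi_2,\dots$ drawn i.i.d. from $\mathcal{D}$: set $v_1=\nabla_y f(x_1,y_1;\xi_1)$, $w_1=\nabla_x f(x_1,y_1;\xi_1)$, and for $t\ge1$: $\tilde y_{t+1}=y_t+\lambda v_t$, $\tilde x_{t+1}=x_t-\gamma w_t$; $y_{t+1}=y_t+\eta_t(\tilde y_{t+1}-y_t)$, $x_{t+1}=x_t+\eta_t(\tilde x_{t+1}-x_t)$; $v_{t+1}=\nabla_y f(x_{t+1},y_{t+1};\xi_{t+1})+(1-\alpha_{t+1})[v_t-\nabla_y f(x_t,y_t;\xi_{t+1})]$; $w_{t+1}=\nabla_x f(x_{t+1},y_{t+1};\xi_{t+1})+(1-\beta_{t+1})[w_t-\nabla_x f(x_t,y_t;\xi_{t+1})]$. *)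

From HB Require Import structures.
From mathcomp Require Import all_boot all_order all_algebra.
From mathcomp Require Import all_classical all_reals all_analysis.
Set Implicit Arguments. Unset Strict Implicit. Unset Printing Implicit Defensive.
Import Order.TTheory GRing.Theory Num.Theory.
Import numFieldNormedType.Exports.
Local Open Scope classical_set_scope.
Local Open Scope ring_scope.

Definition dotv {R : realType} {n : nat} (u v : 'rV[R]_n) : R :=
  \sum_(i < n) u 0 i * v 0 i.
Definition sqnorm {R : realType} {n : nat} (u : 'rV[R]_n) : R := dotv u u.
Definition enorm {R : realType} {n : nat} (u : 'rV[R]_n) : R :=
  Num.sqrt (sqnorm u).

Definition is_gradient {R : realType} {n : nat}
  (h : 'rV[R]_n -> R) (g : 'rV[R]_n -> 'rV[R]_n) : Prop :=
  forall x, differentiable h x /\ forall v, 'd h x v = dotv (g x) v.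

Definition Fmax {R : realType} {d p : nat}
  (f : 'rV[R]_d -> 'rV[R]_p -> R) (x : 'rV[R]_d) : R :=
  sup (range (f x)).

(* Write G = F(x_t) - f(x_t, y_t) and G' = F(x_{t+1}) - f(x_{t+1}, y_t).
   The y-step is an ascent step on f(x_{t+1}, .), whose gradient is Lf-Lipschitz:
   the descent inequality, the PL inequality at (x_{t+1}, y_t) and the Lipschitz
   dependence of grad_y f on x bound the new gap by (1 - eta lambda mu) G' plus the
   variance-type terms.  For the x-step, PL implies quadratic growth: gradient ascent
   from y_t with small steps reaches near-maximizers of f(x_{t+1}, .) at distance at
   most sqrt (2 G' / mu) + eps, and the mixed second difference of f (bounded by
   Lf |x' - x| |w|) then gives G' <= G + Lf |x_{t+1} - x_t| sqrt (2 G' / mu).  By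
   AM-GM this becomes (1 - s) G' <= (1 - s/2) G + O(|x_{t+1} - x_t|^2) with
   s = eta lambda mu, and the step-size conditions absorb the error terms.
   The smoothness of f is inherited from the samples by averaging pointwise linear
   inequalities between values of f(., .; xi).  If mu > Lf, PL forces every
   f(x, .) to be constant and the bound is immediate. *)

From HB Require Import structures.
From mathcomp Require Import all_boot all_order all_algebra.
From mathcomp Require Import all_classical all_reals all_analysis.
From mathcomp Require Import ring lra.
Set Implicit Arguments. Unset Strict Implicit. Unset Printing Implicit Defensive.
Import Order.TTheory GRing.Theory Num.Theory.
Import numFieldNormedType.Exports.
Local Open Scope classical_set_scope.
Local Open Scope ring_scope.

Section Euclid.
Variables (R : realType) (n : nat).
Implicit Types (u v w : 'rV[R]_n) (a : R).

Lemma dotvC u v : dotv u v = dotv v u.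
Proof. by apply: eq_bigr => i _; rewrite mulrC. Qed.

Lemma dotvDl u v w : dotv (u + v) w = dotv u w + dotv v w.
Proof. by rewrite /dotv -big_split; apply: eq_bigr => i _; rewrite !mxE mulrDl. Qed.

Lemma dotvZl a u v : dotv (a *: u) v = a * dotv u v.
Proof. by rewrite /dotv mulr_sumr; apply: eq_bigr => i _; rewrite !mxE mulrA. Qed.

Lemma dotvNl u v : dotv (- u) v = - dotv u v.
Proof. by rewrite -scaleN1r dotvZl mulN1r. Qed.

Lemma dotvBl u v w : dotv (u - v) w = dotv u w - dotv v w.
Proof. by rewrite dotvDl dotvNl. Qed.

Lemma dotvZr a u v : dotv u (a *: v) = a * dotv u v.
Proof. by rewrite dotvC dotvZl dotvC. Qed.

Lemma dotvDr u v w : dotv w (u + v) = dotv w u + dotv w v.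
Proof. by rewrite dotvC dotvDl !(dotvC w). Qed.

Lemma dotvBr u v w : dotv w (u - v) = dotv w u - dotv w v.
Proof. by rewrite dotvC dotvBl !(dotvC w). Qed.

Lemma dotv0l v : dotv 0 v = 0.
Proof. by rewrite -(scale0r 0) dotvZl mul0r. Qed.

Lemma sqnorm0 : sqnorm (0 : 'rV[R]_n) = 0.
Proof. exact: dotv0l. Qed.

Lemma sqnorm_ge0 u : 0 <= sqnorm u.
Proof. by apply: sumr_ge0 => i _; rewrite -expr2 sqr_ge0. Qed.

Lemma sqnorm_eq0 u : sqnorm u = 0 -> u = 0.
Proof.
move/eqP; rewrite psumr_eq0 => [/allP u0|i _]; last by rewrite -expr2 sqr_ge0.
apply/rowP => i; rewrite mxE.
by have /(_ (mem_index_enum _)) := u0 i; rewrite /= mulf_eq0 orbb => /eqP.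
Qed.

Lemma sqnormB u v : sqnorm (u - v) = sqnorm u - 2 * dotv u v + sqnorm v.
Proof. by rewrite /sqnorm !(dotvBl, dotvBr) (dotvC v u); ring. Qed.

Lemma sqnormD u v : sqnorm (u + v) = sqnorm u + 2 * dotv u v + sqnorm v.
Proof. by rewrite /sqnorm !(dotvDl, dotvDr) (dotvC v u); ring. Qed.

Lemma sqnormZ a u : sqnorm (a *: u) = a ^+ 2 * sqnorm u.
Proof. by rewrite /sqnorm dotvZl dotvZr mulrA. Qed.

Lemma sqnormD_le u v : sqnorm (u + v) <= 2 * sqnorm u + 2 * sqnorm v.
Proof. by have := sqnorm_ge0 (u - v); rewrite sqnormB sqnormD; lra. Qed.

Lemma enorm_ge0 u : 0 <= enorm u.
Proof. exact: sqrtr_ge0. Qed.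

Lemma sqr_enorm u : enorm u ^+ 2 = sqnorm u.
Proof. by rewrite sqr_sqrtr // sqnorm_ge0. Qed.

Lemma enormZ a u : enorm (a *: u) = `|a| * enorm u.
Proof. by rewrite /enorm sqnormZ sqrtrM ?sqr_ge0 // sqrtr_sqr. Qed.

Lemma dotv_le u v : dotv u v <= enorm u * enorm v.
Proof.
have [u0|uN0] := eqVneq (enorm u) 0.
  have /sqnorm_eq0 -> : sqnorm u = 0 by rewrite -sqr_enorm u0 expr0n.
  by rewrite dotv0l mulr_ge0 ?enorm_ge0.
have [v0|vN0] := eqVneq (enorm v) 0.
  have /sqnorm_eq0 -> : sqnorm v = 0 by rewrite -sqr_enorm v0 expr0n.
  by rewrite dotvC dotv0l mulr_ge0 ?enorm_ge0.
have uv_gt0 : 0 < enorm v * enorm u by rewrite mulr_gt0 // lt_def ?uN0 ?vN0 enorm_ge0.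
have := sqnorm_ge0 (enorm v *: u - enorm u *: v).
rewrite sqnormB !sqnormZ dotvZl dotvZr -!sqr_enorm => sq_ge0.
rewrite -subr_ge0 -(pmulr_rge0 _ uv_gt0); nra.
Qed.

Lemma enormD_le u v : enorm (u + v) <= enorm u + enorm v.
Proof.
rewrite -(ler_pXn2r (_ : 0 < 2)%N) ?nnegrE ?addr_ge0 ?enorm_ge0 //.
by rewrite sqr_enorm sqnormD -!sqr_enorm; have := dotv_le u v; lra.
Qed.

End Euclid.

Section LineCalculus.
Variable R : realType.

Lemma is_derive_line n (h : 'rV[R]_n -> R) g (b u : 'rV[R]_n) (t : R) :
  is_gradient h g ->
  is_derive t 1 (fun s => h (b + s *: u)) (dotv (g (b + t *: u)) u).
Proof.
move=> /(_ (b + t *: u)) [dh dhE].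
have quotE : (fun s : R => s^-1 *: (((fun s => h (b + s *: u)) \o shift t) (s *: 1)
                                   - h (b + t *: u)))
           = (fun s : R => s^-1 *: ((h \o shift (b + t *: u)) (s *: u) - h (b + t *: u))).
  apply: funext => s /=; congr (_ *: (h _ - _)).
  by rewrite -[s%:A]/(s * 1) mulr1 scalerDl addrCA.
have dhu := @diff_derivable _ _ _ h _ u dh.
split; first by rewrite /derivable quotE.
by rewrite /derive quotE -/(derive h _ u) deriveE // dhE.
Qed.

Lemma is_derive_MVT (phi dphi : R -> R) (a b : R) : a < b ->
  (forall t : R, is_derive t 1 phi (dphi t)) ->
  exists2 c, a < c < b & phi b - phi a = dphi c * (b - a).
Proof.
move=> ab phi'; have [|c] := MVT ab (fun t _ => phi' t).
  by apply: derivable_within_continuous => t _; have [] := phi' t.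
by rewrite in_itv /= => c_ab E; exists c.
Qed.

Lemma chord_le_of_derive_nondecr (phi dphi : R -> R) (t : R) : 0 < t < 1 ->
  (forall s : R, is_derive s 1 phi (dphi s)) ->
  (forall s1 s2, 0 < s1 -> s1 <= s2 -> s2 < 1 -> dphi s1 <= dphi s2) ->
  phi t - phi 0 <= t * (phi 1 - phi 0).
Proof.
move=> /andP[t_gt0 t_lt1] phi' dphi_nd.
have [c1 /andP[c1_gt0 c1_lt] E1] := is_derive_MVT t_gt0 phi'.
have [c2 /andP[c2_gt c2_lt1] E2] := is_derive_MVT t_lt1 phi'.
have := dphi_nd c1 c2 c1_gt0 (ltW (lt_trans c1_lt c2_gt)) c2_lt1.
have -> : phi 1 - phi 0 = (phi 1 - phi t) + (phi t - phi 0) by ring.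
rewrite E1 E2 subr0 => le_c12.
have : 0 <= t * (1 - t) * (dphi c2 - dphi c1) by rewrite !mulr_ge0 ?subr_ge0 // ltW.
nra.
Qed.

Lemma derive0_le_of_chord (phi : R -> R) (D C : R) : is_derive (0 : R) 1 phi D ->
  (forall s, 0 < s < 1 -> phi s - phi 0 <= s * C) -> D <= C.
Proof.
move=> [phi' <-] chord; rewrite /derive cvg_at_rightE //.
apply: limr_le; first by apply: cvgP; apply: cvg_dnbhs_at_right; exact: phi'.
near=> s.
have s_gt0 : 0 < s by near: s; exact: nbhs_right_gt.
have s_lt1 : s < 1 by near: s; exact: nbhs_right_lt.
rewrite /= /GRing.scale /= mulr1 addr0 ler_pdivrMl //.
by apply: chord; rewrite s_gt0 s_lt1.
Unshelve. all: by end_near.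
Qed.

End LineCalculus.

Section LipschitzGradient.
Variables (R : realType) (n : nat) (L : R).
Hypothesis L_ge0 : 0 <= L.

Lemma chord_le_of_lipschitz_grad (u : 'rV[R]_n -> R) g b w (t : R) :
  is_gradient u g -> (forall b b', enorm (g b - g b') <= L * enorm (b - b')) ->
  0 < t < 1 ->
  u (b + t *: w) - u b + L / 2 * t ^+ 2 * sqnorm w
    <= t * (u (b + w) - u b + L / 2 * sqnorm w).
Proof.
move=> u_grad g_lip t01.
pose c := L / 2 * sqnorm w.
have phi' (s : R) : is_derive s 1 (fun s => u (b + s *: w) + c * s ^+ 2)
                                 (dotv (g (b + s *: w)) w + c * (2 * s)).
  apply: is_derive_eq.
    exact: is_deriveD (is_derive_line b w s u_grad)
                      (is_deriveZ c (is_deriveX 2 (is_derive_id s 1))).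
  by rewrite /GRing.scale /=; ring.
have dphi_nd s1 s2 : 0 < s1 -> s1 <= s2 -> s2 < 1 ->
    dotv (g (b + s1 *: w)) w + c * (2 * s1) <= dotv (g (b + s2 *: w)) w + c * (2 * s2).
  move=> _ s12 _.
  have dg := dotv_le (g (b + s1 *: w) - g (b + s2 *: w)) w.
  have := g_lip (b + s1 *: w) (b + s2 *: w).
  rewrite opprD addrACA subrr add0r -scalerBl enormZ distrC ger0_norm ?subr_ge0 //.
  rewrite dotvBl in dg => lip.
  have w_ge0 := enorm_ge0 w; have := ler_wpM2r w_ge0 lip.
  by rewrite /c -sqr_enorm; nra.
have := chord_le_of_derive_nondecr t01 phi' dphi_nd.
by rewrite !scale0r !scale1r !addr0 expr0n expr1n /= mulr0 addr0 mulr1 /c; lra.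
Qed.

Lemma descent_of_chord (u : 'rV[R]_n -> R) g :
  is_gradient u g ->
  (forall b w (t : R), 0 < t < 1 -> u (b + t *: w) - u b + L / 2 * t ^+ 2 * sqnorm w
                                     <= t * (u (b + w) - u b + L / 2 * sqnorm w)) ->
  forall b w, u b + dotv (g b) w - L / 2 * sqnorm w <= u (b + w).
Proof.
move=> u_grad chord b w.
have := derive0_le_of_chord (C := u (b + w) - u b + L / 2 * sqnorm w)
  (is_derive_line b w 0 u_grad).
rewrite /= !scale0r !addr0 => desc0.
have chord0 s : 0 < s < 1 ->
    u (b + s *: w) - u b <= s * (u (b + w) - u b + L / 2 * sqnorm w).
  move=> s01; have := chord b w s s01.
  have : 0 <= L / 2 * s ^+ 2 * sqnorm w.
    by rewrite mulr_ge0 ?sqnorm_ge0 // mulr_ge0 ?sqr_ge0 // divr_ge0.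
  lra.
by have := desc0 chord0; lra.
Qed.

End LipschitzGradient.

Section MixedDifference.
Variables (R : realType) (m n : nat) (L : R) (h : 'rV[R]_m -> 'rV[R]_n -> R)
  (g : 'rV[R]_m -> 'rV[R]_n -> 'rV[R]_n).
Hypothesis h_grad : forall a, is_gradient (h a) (g a).
Hypothesis L_ge0 : 0 <= L.

Lemma mixed_diff_le_of_lipschitz_grad a a' b w :
  (forall b, enorm (g a' b - g a b) <= L * enorm (a' - a)) ->
  h a' (b + w) - h a (b + w) - h a' b + h a b <= L * enorm (a' - a) * enorm w.
Proof.
move=> g_lip.
have phi' (s : R) : is_derive s 1 (fun s => h a' (b + s *: w) - h a (b + s *: w))
                                  (dotv (g a' (b + s *: w) - g a (b + s *: w)) w).
  by rewrite dotvBl; apply: is_deriveB; apply: is_derive_line.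
have [c _] := is_derive_MVT ltr01 phi'.
rewrite !scale0r !scale1r !addr0 subr0 mulr1 => E.
have -> : h a' (b + w) - h a (b + w) - h a' b + h a b
        = h a' (b + w) - h a (b + w) - (h a' b - h a b) by ring.
by rewrite E (le_trans (dotv_le _ _)) // ler_wpM2r ?enorm_ge0.
Qed.

Lemma grad_lipschitz_of_mixed_diff_le :
  (forall a a' b w, h a' (b + w) - h a (b + w) - h a' b + h a b
                     <= L * enorm (a' - a) * enorm w) ->
  forall a a' b, enorm (g a' b - g a b) <= L * enorm (a' - a).
Proof.
move=> mixed a a' b; set dg := g a' b - g a b.
have phi' : is_derive (0 : R) 1 (fun s => h a' (b + s *: dg) - h a (b + s *: dg)) (sqnorm dg).
  apply: is_derive_eq; first by apply: is_deriveB; apply: is_derive_line; exact: h_grad.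
  by rewrite scale0r addr0 -dotvBl.
have := derive0_le_of_chord (C := L * enorm (a' - a) * enorm dg) phi'.
rewrite /= !scale0r !addr0 -sqr_enorm => desc0.
have chord0 s : 0 < s < 1 -> h a' (b + s *: dg) - h a (b + s *: dg) - (h a' b - h a b)
                             <= s * (L * enorm (a' - a) * enorm dg).
  move=> /andP[s_gt0 _]; have := mixed a a' b (s *: dg).
  by rewrite enormZ gtr0_norm //; lra.
have K_ge0 : 0 <= L * enorm (a' - a) by rewrite mulr_ge0 ?enorm_ge0.
by have := desc0 chord0; have := enorm_ge0 dg; nra.
Qed.

End MixedDifference.

Section RintegralSum.
Variables (R : realType) (dm : measure_display) (T : measurableType dm)
  (mu : {measure set T -> \bar R}) (D : set T).
Hypothesis mD : measurable D.

Lemma integrable_sum_fun (I : Type) (s : seq I) (g : I -> T -> R) :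
  (forall i, mu.-integrable D (EFin \o g i)) ->
  mu.-integrable D (EFin \o (fun x => \sum_(i <- s) g i x)).
Proof.
move=> gI; have -> : EFin \o (fun x => \sum_(i <- s) g i x) = fun x => \sum_(i <- s) (g i x)%:E.
  by apply: funext => x; rewrite /= sumEFin.
by apply: integrable_sum => // i _; exact: gI.
Qed.

Lemma Rintegral_sum (I : Type) (s : seq I) (g : I -> T -> R) :
  (forall i, mu.-integrable D (EFin \o g i)) ->
  \int[mu]_(x in D) (\sum_(i <- s) g i x) = \sum_(i <- s) \int[mu]_(x in D) g i x.
Proof.
move=> gI; elim: s => [|i s IH].
  by under eq_Rintegral do rewrite big_nil; rewrite Rintegral_cst // mul0r big_nil.
under eq_Rintegral do rewrite big_cons.
by rewrite RintegralD ?IH ?big_cons //; exact: integrable_sum_fun.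
Qed.

End RintegralSum.

Section Expectation.
Variables (R : realType) (dm : measure_display) (Xi : measurableType dm)
  (P : probability Xi R).

Lemma le_Rintegral_lincomb (I : Type) (s : seq I) (c : I -> R) (g : I -> Xi -> R) (C : R) :
  (forall i, P.-integrable setT (EFin \o g i)) ->
  (forall o, \sum_(i <- s) c i * g i o <= C) ->
  \sum_(i <- s) c i * \int[P]_(o in setT) g i o <= C.
Proof.
move=> gI le_C.
have cgI i : P.-integrable setT (EFin \o (fun o => c i * g i o)).
  have -> : EFin \o (fun o => c i * g i o) = (fun o => (c i)%:E * (EFin \o g i) o)%E.
    by apply: funext => o; rewrite /= EFinM.
  exact: integrableZl.
under eq_bigr do rewrite -RintegralZl //.
rewrite -Rintegral_sum //.
apply: le_trans (le_Rintegral (f2 := fun _ => C) _ _ _ _) _ => //.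
- exact: integrable_sum_fun.
- exact: finite_measure_integrable_cst.
- have P1 : fine (P [set: Xi]) = 1 by rewrite /= probability_setT.
  by rewrite Rintegral_cst // P1 mulr1.
Qed.

End Expectation.

Section MeanSmoothness.
Variables (R : realType) (d p : nat) (dm : measure_display) (Xi : measurableType dm)
  (P : probability Xi R) (fs : Xi -> 'rV[R]_d -> 'rV[R]_p -> R)
  (gsy : Xi -> 'rV[R]_d -> 'rV[R]_p -> 'rV[R]_p)
  (f : 'rV[R]_d -> 'rV[R]_p -> R) (gy : 'rV[R]_d -> 'rV[R]_p -> 'rV[R]_p) (Lf : R).
Hypothesis fsI : forall a b, P.-integrable setT (fun o => (fs o a b)%:E).
Hypothesis fE : forall a b, f a b = Rintegral P setT (fun o => fs o a b).
Hypothesis gsy_grad : forall o a, is_gradient (fun b => fs o a b) (fun b => gsy o a b).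
Hypothesis gy_grad : forall a, is_gradient (fun b => f a b) (fun b => gy a b).
Hypothesis Lf_ge0 : 0 <= Lf.
Hypothesis gsy_lipx :
  forall o a a' b, enorm (gsy o a b - gsy o a' b) <= Lf * enorm (a - a').
Hypothesis gsy_lipy :
  forall o a b b', enorm (gsy o a b - gsy o a b') <= Lf * enorm (b - b').

Lemma mean_lincomb_le (s : seq (R * ('rV[R]_d * 'rV[R]_p))) (C : R) :
  (forall o, \sum_(k <- s) k.1 * fs o k.2.1 k.2.2 <= C) ->
  \sum_(k <- s) k.1 * f k.2.1 k.2.2 <= C.
Proof.
move=> le_C; under eq_bigr do rewrite fE.
by apply: (le_Rintegral_lincomb (g := fun k o => fs o k.2.1 k.2.2)) => // k; exact: fsI.
Qed.

Lemma mean_mixed_diff_le a a' b w :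
  f a' (b + w) - f a (b + w) - f a' b + f a b <= Lf * enorm (a' - a) * enorm w.
Proof.
have := mean_lincomb_le
  (s := [:: (1, (a', b + w)); (-1, (a, b + w)); (-1, (a', b)); (1, (a, b))])
  (C := Lf * enorm (a' - a) * enorm w).
rewrite !big_cons big_nil /= !mul1r !mulN1r addr0 !addrA; apply => o.
rewrite !big_cons big_nil /= !mul1r !mulN1r addr0 !addrA.
by apply: mixed_diff_le_of_lipschitz_grad => // b'; apply: gsy_lipx.
Qed.

Lemma mean_chord_le a b w (t : R) : 0 < t < 1 ->
  f a (b + t *: w) - f a b + Lf / 2 * t ^+ 2 * sqnorm w
    <= t * (f a (b + w) - f a b + Lf / 2 * sqnorm w).
Proof.
move=> t01; set K := Lf / 2 * sqnorm w.
suff : f a (b + t *: w) + (t - 1) * f a b - t * f a (b + w)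
       <= t * K - Lf / 2 * t ^+ 2 * sqnorm w by rewrite /K; lra.
have := mean_lincomb_le (s := [:: (1, (a, b + t *: w)); (t - 1, (a, b)); (- t, (a, b + w))])
  (C := t * K - Lf / 2 * t ^+ 2 * sqnorm w).
rewrite !big_cons big_nil /= mul1r mulNr addr0 !addrA; apply => o.
rewrite !big_cons big_nil /= mul1r mulNr addr0 !addrA.
have := chord_le_of_lipschitz_grad b w (gsy_grad o a) (gsy_lipy o a) t01.
by rewrite -/K; lra.
Qed.

Lemma mean_descent a b w : f a b + dotv (gy a b) w - Lf / 2 * sqnorm w <= f a (b + w).
Proof.
(* gy is not known to be the mean of gsy, so the descent inequality of the samples
   cannot be averaged; its gradient-free chord form can *)
by apply: descent_of_chord => // {}b {}w t; exact: mean_chord_le.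
Qed.

Lemma mean_grad_lipschitz a a' b : enorm (gy a' b - gy a b) <= Lf * enorm (a' - a).
Proof. by apply: grad_lipschitz_of_mixed_diff_le => //; exact: mean_mixed_diff_le. Qed.

End MeanSmoothness.

Section RealSequences.
Variable R : realType.

Lemma linear_rate_of_contraction (e : nat -> R) (c : R) :
  0 <= c -> (forall k, 0 <= e k) -> (forall k, e k.+1 <= (1 - c) * e k) ->
  forall K, e K * (1 + c * K%:R) <= e 0%N.
Proof.
move=> c_ge0 e_ge0 e_contr; elim=> [|K IH]; first by rewrite mulr0 addr0 mulr1.
have cK_ge0 : 0 <= c * K%:R by rewrite mulr_ge0.
have ce_ge0 : 0 <= c * e K by rewrite mulr_ge0.
have e_decr : e K.+1 <= e K by have := e_contr K; lra.
have := ler_wpM2r (addr_ge0 ler01 cK_ge0) (e_contr K).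
have := ler_wpM2l c_ge0 e_decr; have := mulr_ge0 ce_ge0 cK_ge0.
rewrite -natr1 mulrDr mulr1; nra.
Qed.

Lemma sqrt_sub_ge (e e' c s q : R) : 0 <= e' -> 0 <= c -> 0 < s -> 0 <= q ->
  e' <= e - c * q ^+ 2 -> 4 * s ^+ 2 * e <= q ^+ 2 ->
  c * s * q <= Num.sqrt e - Num.sqrt e'.
Proof.
move=> e'_ge0 c_ge0 s_gt0 q_ge0 e'_le q_ge.
have cq_ge0 : 0 <= c * q ^+ 2 by rewrite mulr_ge0 ?sqr_ge0.
have e_ge0 : 0 <= e by lra.
set r := Num.sqrt e; set r' := Num.sqrt e'.
have r_ge0 : 0 <= r := sqrtr_ge0 e; have r'_ge0 : 0 <= r' := sqrtr_ge0 e'.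
have [re r're] : r ^+ 2 = e /\ r' ^+ 2 = e' by rewrite !sqr_sqrtr.
have sr_le : 2 * s * r <= q.
  have sr_ge0 : 0 <= 2 * s * r by rewrite !mulr_ge0 // ltW.
  rewrite -(ler_pXn2r (_ : 0 < 2)%N) ?nnegrE //.
  by rewrite !exprMn re [2 ^+ 2]expr2; lra.
have r'_le : r' <= r by rewrite -(ler_pXn2r (_ : 0 < 2)%N) ?nnegrE // re r're; nra.
(* r - r' = (e - e') / (r + r') >= c q^2 / (2 r) >= c s q *)
have r_gap : s * (c * q ^+ 2) <= (r - r') * q.
  have : s * (c * q ^+ 2) <= s * ((r - r') * (r + r')) by rewrite ler_pM2l //; nra.
  have : s * (r + r') <= q by nra.
  nra.
have [->|q_neq0] := eqVneq q 0; first by rewrite mulr0 subr_ge0.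
have q_gt0 : 0 < q by rewrite lt_def q_neq0.
by rewrite -(ler_pM2r q_gt0); nra.
Qed.

Lemma enorm_telescope_le n (b : nat -> 'rV[R]_n) (r : nat -> R) (k : R) : 0 <= k ->
  (forall i, k * enorm (b i.+1 - b i) <= r i - r i.+1) ->
  forall K, k * enorm (b K - b 0%N) <= r 0%N - r K.
Proof.
move=> k_ge0 step; elim=> [|K IH].
  by rewrite !subrr /enorm sqnorm0 sqrtr0 mulr0.
have := step K; have := ler_wpM2l k_ge0 (enormD_le (b K.+1 - b K) (b K - b 0%N)).
by rewrite addrA subrK; lra.
Qed.

End RealSequences.

Section PolyakLojasiewicz.
Variables (R : realType) (n : nat) (u : 'rV[R]_n -> R) (g : 'rV[R]_n -> 'rV[R]_n) (L mu : R).
Hypothesis L_gt0 : 0 < L.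
Hypothesis mu_gt0 : 0 < mu.
Hypothesis u_descent : forall b w, u b + dotv (g b) w - L / 2 * sqnorm w <= u (b + w).
Hypothesis u_max : exists b0, forall b, u b <= u b0.
Hypothesis u_PL : forall b, 2 * mu * (sup (range u) - u b) <= sqnorm (g b).

Local Notation gap b := (sup (range u) - u b).

Lemma sup_range_ge b : u b <= sup (range u).
Proof.
have [b0 b0_max] := u_max.
by apply: ub_le_sup; [exists (u b0) => _ [c _ <-] | exists b].
Qed.

Lemma gap_ge0 b : 0 <= gap b.
Proof. by rewrite subr_ge0 sup_range_ge. Qed.

Lemma gap_ascent_step b (h : R) :
  gap (b + h *: g b) <= gap b - h * (1 - L * h / 2) * sqnorm (g b).
Proof.
have := u_descent b (h *: g b); rewrite dotvZr sqnormZ -/(sqnorm (g b)).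
have -> : L / 2 * (h ^+ 2 * sqnorm (g b)) = h * (L * h / 2) * sqnorm (g b) by ring.
lra.
Qed.

Lemma sqnorm_grad_le_gap b : sqnorm (g b) <= 2 * L * gap b.
Proof.
have := gap_ascent_step b L^-1; have := gap_ge0 (b + L^-1 *: g b).
have -> : L^-1 * (1 - L * L^-1 / 2) = (2 * L)^-1 by field; rewrite gt_eqF.
move=> gap'_ge0 step; have : (2 * L)^-1 * sqnorm (g b) <= gap b by lra.
by rewrite ler_pdivrMl ?mulr_gt0.
Qed.

Lemma flat_of_PL_gt_smooth b : L < mu -> gap b = 0 /\ g b = 0.
Proof.
move=> L_lt_mu; have grad_le := sqnorm_grad_le_gap b.
have gap0 : gap b = 0 by have := u_PL b; have := gap_ge0 b; nra.
split=> //; apply: sqnorm_eq0.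
by have := sqnorm_ge0 (g b); rewrite gap0 mulr0 in grad_le; lra.
Qed.

Definition grad_ascent (h : R) b := b + h *: g b.

Section AscentIterates.
Variables (h : R) (b0 : 'rV[R]_n).
Hypotheses (h_gt0 : 0 < h) (Lh_le1 : L * h <= 1).

Local Notation b k := (iter k (grad_ascent h) b0).
Local Notation theta := (1 - L * h / 2).

Lemma theta_ge : 1 / 2 <= theta.
Proof. by have := Lh_le1; lra. Qed.

Lemma ascent_gap_rate K : gap (b K) * (1 + 2 * mu * h * theta * K%:R) <= gap b0.
Proof.
apply: (linear_rate_of_contraction (e := fun k => gap (b k))) => [|k|k].
- by rewrite !mulr_ge0 ?ltW //; have := theta_ge; lra.
- exact: gap_ge0.
- have htheta : 0 <= h * theta by rewrite mulr_ge0 ?ltW //; have := theta_ge; lra.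
  have := ler_wpM2l htheta (u_PL (b k)); have := gap_ascent_step (b k) h.
  by rewrite /= /grad_ascent; nra.
Qed.

Lemma ascent_dist_le K :
  theta * Num.sqrt (mu / 2) * enorm (b K - b0) <= Num.sqrt (gap b0).
Proof.
have theta_gt0 : 0 < theta by have := theta_ge; lra.
suff : theta * Num.sqrt (mu / 2) * enorm (b K - b 0%N)
       <= Num.sqrt (gap (b 0%N)) - Num.sqrt (gap (b K)).
  by have := sqrtr_ge0 (gap (b K)); lra.
apply: (enorm_telescope_le (b := fun k => b k) (r := fun k => Num.sqrt (gap (b k)))).
  by rewrite mulr_ge0 ?sqrtr_ge0 ?ltW.
move=> k.
have -> : b k.+1 - b k = h *: g (b k) by rewrite /= /grad_ascent addrAC subrr add0r.
rewrite enormZ gtr0_norm //.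
have -> : theta * Num.sqrt (mu / 2) * (h * enorm (g (b k)))
        = h * theta * Num.sqrt (mu / 2) * enorm (g (b k)) by ring.
apply: sqrt_sub_ge.
- exact: gap_ge0.
- by rewrite mulr_ge0 ?ltW.
- by rewrite sqrtr_gt0 divr_gt0.
- exact: enorm_ge0.
- by rewrite sqr_enorm; exact: gap_ascent_step.
- rewrite sqr_enorm sqr_sqrtr; last by rewrite divr_ge0 // ltW.
  by rewrite (_ : 4 * (mu / 2) = 2 * mu); [exact: u_PL | field].
Qed.

End AscentIterates.

Lemma exists_near_maximizer b0 (eps : R) : 0 < eps ->
  exists b, gap b <= eps /\ enorm (b - b0) <= Num.sqrt (2 * gap b0 / mu) + eps.
Proof.
move=> eps_gt0.
set rho := Num.sqrt (2 * gap b0 / mu).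
have rho_ge0 : 0 <= rho := sqrtr_ge0 _.
(* the step h makes theta := 1 - L h / 2 so close to 1 that rho / theta <= rho + eps *)
have rho_eps_gt0 : 0 < rho + eps by lra.
set h := eps / (L * (rho + eps)).
have h_gt0 : 0 < h by rewrite divr_gt0 // mulr_gt0.
have Lh_eps : L * h * (rho + eps) = eps by rewrite /h; field; rewrite !gt_eqF.
have Lh_le1 : L * h <= 1 by nra.
set theta := 1 - L * h / 2.
have theta_rho : rho <= theta * (rho + eps) by rewrite /theta; nra.
have theta_gt0 : 0 < theta by have := theta_ge Lh_le1; rewrite -/theta; lra.
set c := 2 * mu * h * theta.
have c_gt0 : 0 < c by rewrite /c mulr_gt0 // mulr_gt0 // mulr_gt0.
have [K gap_lt] : exists K : nat, gap b0 < c * eps * K%:R.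
  exists (Num.truncn (gap b0 / (c * eps))).+1.
  by rewrite mulrC -ltr_pdivrMr ?(mulr_gt0 c_gt0 eps_gt0) //; exact: truncnS_gt.
have K_gt0 : (0 < K)%N by case: K gap_lt => //; rewrite mulr0 ltNge gap_ge0.
exists (iter K (grad_ascent h) b0); split.
  have := ascent_gap_rate b0 h_gt0 Lh_le1 K; rewrite -/theta -/c => rate.
  have := gap_ge0 (iter K (grad_ascent h) b0).
  have cK_gt0 : 0 < c * K%:R by rewrite mulr_gt0 // ltr0n.
  by rewrite -(ler_pM2r cK_gt0); nra.
have := ascent_dist_le b0 h_gt0 Lh_le1 K; rewrite -/theta.
have -> : Num.sqrt (gap b0) = Num.sqrt (mu / 2) * rho.
  by rewrite -sqrtrM ?divr_ge0 ?ltW //; congr Num.sqrt; field; rewrite gt_eqF.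
have s_gt0 : 0 < Num.sqrt (mu / 2) by rewrite sqrtr_gt0 divr_gt0.
rewrite mulrAC [_ * rho]mulrC ler_pM2r // => dist_le.
rewrite -(ler_pM2l theta_gt0); nra.
Qed.

End PolyakLojasiewicz.

Section StepSizeAlgebra.
Variable R : realType.

Lemma gap_contraction (G G' M s mu : R) : 0 < mu -> 0 < s <= 2 -> 0 <= M -> 0 <= G' ->
  G' <= G + M * Num.sqrt (2 * G' / mu) ->
  (1 - s) * G' <= (1 - s / 2) * G + M ^+ 2 / (s * mu).
Proof.
move=> mu_gt0 /andP[s_gt0 s_le2] M_ge0 G'_ge0.
set rho := Num.sqrt _; have rho_ge0 : 0 <= rho := sqrtr_ge0 _.
have G'E : G' = mu * rho ^+ 2 / 2.
  rewrite sqr_sqrtr; last by rewrite divr_ge0 ?mulr_ge0 // ltW.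
  by field; rewrite gt_eqF.
have smu_gt0 : 0 < s * mu by rewrite mulr_gt0.
have ME : M ^+ 2 / (s * mu) * (s * mu) = M ^+ 2 by rewrite mulfVK ?gt_eqF.
move=> growth.
have dec : (1 - s / 2) * (G' - M * rho) <= (1 - s / 2) * G by rewrite ler_wpM2l; lra.
have amgm : M * rho <= s * mu * rho ^+ 2 / 4 + M ^+ 2 / (s * mu).
  rewrite -(ler_pM2r smu_gt0) mulrDl ME.
  by have := sqr_ge0 (s * mu * rho / 2 - M); nra.
have := mulr_ge0 (divr_ge0 (ltW s_gt0) (ler0n _ 2)) (mulr_ge0 M_ge0 rho_ge0).
by rewrite G'E in dec *; nra.
Qed.

Lemma stepsize_const_le (eta lambda gamma mu Lf : R) :
  0 < eta -> 0 < lambda -> 0 < gamma -> 0 < mu -> mu <= Lf ->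
  gamma <= lambda * mu / (16 * (Lf * (1 + (Lf / mu) / 2))) ->
  lambda <= 1 / (2 * Lf * eta) ->
  Lf ^+ 2 / (lambda * mu ^+ 2) + lambda * Lf ^+ 2 * eta ^+ 2 <= 1 / (8 * gamma).
Proof.
move=> eta_gt0 lambda_gt0 gamma_gt0 mu_gt0 mu_le_Lf gamma_le lambda_le.
have Lf_gt0 : 0 < Lf by lra.
have A_le : lambda * eta * (2 * Lf) <= 1.
  by move: lambda_le; rewrite ler_pdivlMr ?mulr_gt0 // => h; nra.
have D_gt0 : 0 < 16 * (Lf * (1 + Lf / mu / 2)).
  by rewrite mulr_gt0 // mulr_gt0 // addr_gt0 // divr_gt0 // divr_gt0.
have gamma_D : gamma * (16 * (Lf * (1 + Lf / mu / 2))) <= lambda * mu.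
  by move: gamma_le; rewrite ler_pdivlMr.
have gamma_le' : gamma * (16 * Lf * mu + 8 * Lf ^+ 2) <= lambda * mu ^+ 2.
  have -> : 16 * Lf * mu + 8 * Lf ^+ 2 = 16 * (Lf * (1 + Lf / mu / 2)) * mu.
    by field; rewrite gt_eqF.
  by have := ler_wpM2r (ltW mu_gt0) gamma_D; rewrite expr2; lra.
have A2_le : (lambda * eta) ^+ 2 * (Lf * mu) <= 1 / 4.
  have : (lambda * eta * (2 * Lf)) ^+ 2 <= 1.
    by rewrite expr_le1 // !mulr_ge0 ?ltW.
  nra.
rewrite ler_pdivlMr ?mulr_gt0 //.
have -> : (Lf ^+ 2 / (lambda * mu ^+ 2) + lambda * Lf ^+ 2 * eta ^+ 2) * (8 * gamma)
   = (8 * gamma * Lf ^+ 2 + 8 * gamma * (lambda * eta) ^+ 2 * Lf ^+ 2 * mu ^+ 2)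
     / (lambda * mu ^+ 2) by field; rewrite !gt_eqF.
rewrite ler_pdivrMr ?mulr_gt0 ?exprn_gt0 // mul1r.
have : 0 <= 8 * gamma * Lf * mu by rewrite !mulr_ge0 ?ltW.
nra.
Qed.

End StepSizeAlgebra.

Section MinimaxStep.
Variables (R : realType) (d p : nat) (f : 'rV[R]_d -> 'rV[R]_p -> R)
  (gy : 'rV[R]_d -> 'rV[R]_p -> 'rV[R]_p) (mu Lf : R).
Hypotheses (mu_gt0 : 0 < mu) (Lf_gt0 : 0 < Lf).
Hypothesis f_max : forall a, exists b0, forall b, f a b <= f a b0.
Hypothesis f_PL : forall a b, 2 * mu * (Fmax f a - f a b) <= sqnorm (gy a b).
Hypothesis f_descent :
  forall a b w, f a b + dotv (gy a b) w - Lf / 2 * sqnorm w <= f a (b + w).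
Hypothesis f_mixed : forall a a' b w,
  f a' (b + w) - f a (b + w) - f a' b + f a b <= Lf * enorm (a' - a) * enorm w.
Hypothesis gy_lip : forall a a' b, enorm (gy a' b - gy a b) <= Lf * enorm (a' - a).

Local Notation gap a b := (Fmax f a - f a b).

Lemma Fmax_ge a b : f a b <= Fmax f a.
Proof. exact: sup_range_ge. Qed.

Lemma gap_growth x0 x1 y :
  gap x1 y <= gap x0 y + Lf * enorm (x1 - x0) * Num.sqrt (2 * gap x1 y / mu).
Proof.
set M := Lf * enorm (x1 - x0); set rho := Num.sqrt _.
have M_ge0 : 0 <= M by rewrite mulr_ge0 ?enorm_ge0 ?ltW.
apply/ler_addgt0Pr => e e_gt0.
have M1_gt0 : 0 < 1 + M by lra.
have [b [gap_b dist_b]] := exists_near_maximizer (u := f x1) Lf_gt0 mu_gt0 (f_descent x1)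
  (f_max x1) (f_PL x1) y (divr_gt0 e_gt0 M1_gt0).
rewrite -/(Fmax f x1) -/rho in gap_b dist_b.
have := f_mixed x0 x1 y (b - y); rewrite subrKC -/M => mixed.
have := ler_wpM2l M_ge0 dist_b; have := Fmax_ge x0 b.
have : e / (1 + M) + M * (e / (1 + M)) = e by field; rewrite gt_eqF.
lra.
Qed.

Lemma gap_ascent a y v g (A : R) : 0 <= A -> 2 * Lf * A <= 1 ->
  gap a (y + A *: v) <= (1 - A * mu) * gap a y + A * sqnorm (g - v)
                        + A * sqnorm (gy a y - g) - A / 4 * sqnorm v.
Proof.
move=> A_ge0 A_le; set g' := gy a y.
have := f_descent a y (A *: v); rewrite dotvZr sqnormZ.
have polar : 2 * dotv g' v = sqnorm g' + sqnorm v - sqnorm (g' - v).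
  by rewrite sqnormB; ring.
have split_le := sqnormD_le (g - v) (g' - g); rewrite addrC subrKA in split_le.
have := ler_wpM2l A_ge0 (f_PL a y); have := ler_wpM2l A_ge0 split_le.
have := ler_wpM2r (mulr_ge0 A_ge0 (sqnorm_ge0 v)) A_le.
nra.
Qed.

Lemma gap_x_step x0 Dx y (eta lambda gamma : R) :
  0 < eta -> 0 < lambda -> 0 < gamma ->
  gamma <= lambda * mu / (16 * (Lf * (1 + (Lf / mu) / 2))) ->
  lambda <= 1 / (2 * Lf * eta) ->
  (1 - eta * lambda * mu) * gap (x0 + eta *: Dx) y
    + eta * lambda * sqnorm (gy (x0 + eta *: Dx) y - gy x0 y)
  <= (1 - eta * lambda * mu / 2) * gap x0 y + eta / (8 * gamma) * sqnorm Dx.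
Proof.
move=> eta_gt0 lambda_gt0 gamma_gt0 gamma_le lambda_le.
set x1 := x0 + eta *: Dx.
have Dx_term_ge0 : 0 <= eta / (8 * gamma) * sqnorm Dx.
  by rewrite mulr_ge0 ?sqnorm_ge0 // divr_ge0 ?mulr_ge0 ?ltW.
have [mu_le_Lf|Lf_lt_mu] := leP mu Lf; last first.
  have flat a := flat_of_PL_gt_smooth Lf_gt0 (f_descent a) (f_max a) (f_PL a) y Lf_lt_mu.
  have [[gap0 ->] [gap1 ->]] := (flat x0, flat x1).
  by rewrite /Fmax gap0 gap1 subr0 sqnorm0 !mulr0 !add0r.
set A := eta * lambda; set M := Lf * eta * enorm Dx.
have dist_x : enorm (x1 - x0) = eta * enorm Dx.
  by rewrite addrAC subrr add0r enormZ gtr0_norm.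
have A_le : A * (2 * Lf) <= 1 by move: lambda_le; rewrite ler_pdivlMr ?mulr_gt0 // /A; nra.
have growth := gap_growth x0 x1 y; rewrite dist_x mulrA -/M in growth.
have A_gt0 : 0 < A by rewrite mulr_gt0.
have M_ge0 : 0 <= M by rewrite !mulr_ge0 ?enorm_ge0 ?ltW.
have Amu : 0 < A * mu <= 2.
  rewrite mulr_gt0 //=; have := ler_wpM2l (ltW A_gt0) mu_le_Lf; lra.
have contr := gap_contraction mu_gt0 Amu M_ge0 (gap_ge0 (f_max x1) y) growth.
have lip : sqnorm (gy x1 y - gy x0 y) <= M ^+ 2.
  rewrite -sqr_enorm ler_pXn2r ?nnegrE ?enorm_ge0 //.
  by rewrite /M -mulrA -dist_x gy_lip.
have cost : M ^+ 2 / (A * mu * mu) + A * M ^+ 2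
    = eta * sqnorm Dx * (Lf ^+ 2 / (lambda * mu ^+ 2) + lambda * Lf ^+ 2 * eta ^+ 2).
  by rewrite /M /A -sqr_enorm; field; rewrite !gt_eqF.
have := stepsize_const_le eta_gt0 lambda_gt0 gamma_gt0 mu_gt0 mu_le_Lf gamma_le lambda_le.
move/(ler_wpM2l (mulr_ge0 (ltW eta_gt0) (sqnorm_ge0 Dx))); rewrite -cost.
have := ler_wpM2l (ltW A_gt0) lip.
have -> : eta / (8 * gamma) * sqnorm Dx = eta * sqnorm Dx * (1 / (8 * gamma)) by ring.
rewrite -/(Fmax f x1) -/A in contr *; lra.
Qed.

Lemma msgda_gap_step x0 Dx y v (eta lambda gamma : R) :
  0 < eta -> 0 < lambda -> 0 < gamma ->
  gamma <= lambda * mu / (16 * (Lf * (1 + (Lf / mu) / 2))) ->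
  lambda <= 1 / (2 * Lf * eta) ->
  gap (x0 + eta *: Dx) (y + eta *: (lambda *: v))
  <= (1 - eta * lambda * mu / 2) * gap x0 y + eta / (8 * gamma) * sqnorm Dx
     - eta / (4 * lambda) * sqnorm (lambda *: v) + eta * lambda * sqnorm (gy x0 y - v).
Proof.
move=> eta_gt0 lambda_gt0 gamma_gt0 gamma_le lambda_le.
have A_le : 2 * Lf * (eta * lambda) <= 1.
  by move: lambda_le; rewrite ler_pdivlMr ?mulr_gt0 //; nra.
have := gap_ascent (x0 + eta *: Dx) y v (gy x0 y) (ltW (mulr_gt0 eta_gt0 lambda_gt0)) A_le.
have := gap_x_step x0 Dx y eta_gt0 lambda_gt0 gamma_gt0 gamma_le lambda_le.
have -> : eta / (4 * lambda) * sqnorm (lambda *: v) = eta * lambda / 4 * sqnorm v.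
  by rewrite sqnormZ; field; rewrite gt_eqF.
by rewrite scalerA; lra.
Qed.

End MinimaxStep.

Theorem lemma1 (R : realType) (d p : nat)
  (dm : measure_display) (Xi : measurableType dm) (P : probability Xi R)
  (* stochastic components f(x,y;xi) and their partial gradients *)
  (fs : Xi -> 'rV[R]_d -> 'rV[R]_p -> R)
  (gsx : Xi -> 'rV[R]_d -> 'rV[R]_p -> 'rV[R]_d)
  (gsy : Xi -> 'rV[R]_d -> 'rV[R]_p -> 'rV[R]_p)
  (* the expected function f and its partial gradients *)
  (f : 'rV[R]_d -> 'rV[R]_p -> R)
  (gx : 'rV[R]_d -> 'rV[R]_p -> 'rV[R]_d)
  (gy : 'rV[R]_d -> 'rV[R]_p -> 'rV[R]_p)
  (mu Lf gamma lambda : R)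
  (eta alpha beta : nat -> R)
  (xi : nat -> Xi)
  (x xt w : nat -> 'rV[R]_d) (y yt v : nat -> 'rV[R]_p) :
  (* f(x,y) = E_{xi ~ D}[f(x,y;xi)] *)
  (forall a b, P.-integrable setT (fun o => (fs o a b)%:E)) ->
  (forall a b, f a b = Rintegral P setT (fun o => fs o a b)) ->
  (* gradients *)
  (forall o b, is_gradient (fun a => fs o a b) (fun a => gsx o a b)) ->
  (forall o a, is_gradient (fun b => fs o a b) (fun b => gsy o a b)) ->
  (forall b, is_gradient (fun a => f a b) (fun a => gx a b)) ->
  (forall a, is_gradient (fun b => f a b) (fun b => gy a b)) ->
  (* (A1) *)
  0 < mu ->
  (forall a, exists b0, forall b, f a b <= f a b0) ->
  (forall a b, sqnorm (gy a b) >= 2 * mu * (Fmax f a - f a b)) ->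
  (* (A2) *)
  0 < Lf ->
  (forall o a a' b, enorm (gsx o a b - gsx o a' b) <= Lf * enorm (a - a')) ->
  (forall o a b b', enorm (gsx o a b - gsx o a b') <= Lf * enorm (b - b')) ->
  (forall o a a' b, enorm (gsy o a b - gsy o a' b) <= Lf * enorm (a - a')) ->
  (forall o a b b', enorm (gsy o a b - gsy o a b') <= Lf * enorm (b - b')) ->
  (* MSGDA parameters *)
  (forall t, (1 <= t)%N -> 0 < eta t) ->
  (forall t, (1 <= t)%N -> 0 < alpha t <= 1) ->
  (forall t, (1 <= t)%N -> 0 < beta t <= 1) ->
  (* MSGDA iterations *)
  v 1%N = gsy (xi 1%N) (x 1%N) (y 1%N) ->
  w 1%N = gsx (xi 1%N) (x 1%N) (y 1%N) ->
  (forall t, (1 <= t)%N -> yt t.+1 = y t + lambda *: v t) ->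
  (forall t, (1 <= t)%N -> xt t.+1 = x t - gamma *: w t) ->
  (forall t, (1 <= t)%N -> y t.+1 = y t + eta t *: (yt t.+1 - y t)) ->
  (forall t, (1 <= t)%N -> x t.+1 = x t + eta t *: (xt t.+1 - x t)) ->
  (forall t, (1 <= t)%N -> v t.+1 = gsy (xi t.+1) (x t.+1) (y t.+1)
      + (1 - alpha t.+1) *: (v t - gsy (xi t.+1) (x t) (y t))) ->
  (forall t, (1 <= t)%N -> w t.+1 = gsx (xi t.+1) (x t.+1) (y t.+1)
      + (1 - beta t.+1) *: (w t - gsx (xi t.+1) (x t) (y t))) ->
  (* step-size conditions, with kappa = Lf/mu and L = Lf (1 + kappa/2) *)
  0 < gamma ->
  gamma <= lambda * mu / (16 * (Lf * (1 + (Lf / mu) / 2))) ->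
  0 < lambda ->
  (forall t, (1 <= t)%N -> lambda <= 1 / (2 * Lf * eta t)) ->
  forall t, (1 <= t)%N ->
    Fmax f (x t.+1) - f (x t.+1) (y t.+1)
    <= (1 - eta t * lambda * mu / 2) * (Fmax f (x t) - f (x t) (y t))
       + eta t / (8 * gamma) * sqnorm (xt t.+1 - x t)
       - eta t / (4 * lambda) * sqnorm (yt t.+1 - y t)
       + eta t * lambda * sqnorm (gy (x t) (y t) - v t).
Proof.
move=> fsI fE _ gsy_grad _ gy_grad mu_gt0 f_max f_PL Lf_gt0 _ _ gsy_lipx gsy_lipy
  eta_gt0 _ _ _ _ ytE _ yE xE _ _ gamma_gt0 gamma_le lambda_gt0 lambda_le t t_ge1.
have f_descent := mean_descent fsI fE gsy_grad gy_grad (ltW Lf_gt0) gsy_lipy.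
have f_mixed := mean_mixed_diff_le fsI fE gsy_grad gsy_lipx.
have gy_lip := mean_grad_lipschitz fsI fE gsy_grad gy_grad (ltW Lf_gt0) gsy_lipx.
have dy : yt t.+1 - y t = lambda *: v t by rewrite ytE // addrAC subrr add0r.
rewrite xE // yE // dy.
exact: (msgda_gap_step mu_gt0 Lf_gt0 f_max f_PL f_descent f_mixed gy_lip
  _ _ _ _ (eta_gt0 t t_ge1) lambda_gt0 gamma_gt0 gamma_le (lambda_le t t_ge1)).
Qed.
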